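(* Let $V$ be a vertex operator algebra of CFT type which is strongly generated by a homogeneous subspace $U\subseteq V_+$. Let $M=\bigoplus_{n\ge0}M(n)$ be an admissible $V$-module such that $M=W+C_1(M)$ for some homogeneous subspace $W\subseteq M$. Then $M$ is spanned by the elements $u^1_{-n_1}\cdots u^r_{-n_r}w$ with $r\ge0$, $n_i\ge1$, $u^i\in U$ and $w\in W$ homogeneous. In particular, $M$ is strongly generated by $W$.
   Context: $V=\bigoplus_{n\ge0}V_n$ is of CFT type if $V_0=\mathbb{C}\mathbf{1}$; $V_+=\bigoplus_{n\ge1}V_n$. $V$ is strongly generated by $U$ if $V$ is spanned by $a^1_{-n_1}\cdots a^r_{-n_r}\mathbf{1}$ with $r\ge0$, $a^i\in U$, $n_i\ge1$ (where $Y(a,z)=\sum_na_nz^{-n-1}$). For the admissible module $M=\bigoplus_{n\ge0}M(n)$, $Y_M(a,z)=\sum_na_nz^{-n-1}$ and $a_nM(m)\subseteq M(m+\mathrm{wt}\,a-n-1)$ for homogeneous $a$; a homogeneous subspace means one spanned by elements lying in the $M(n)$. $C_1(M)$ is the span of $a_{-1}v$ for homogeneous $a\in V_+$ and $v\in M$. $M$ is strongly generated by a subset $W\subseteq M$ if $M$ is spanned by $a^1_{-n_1}\cdots a^k_{-n_k}w$ with $k\ge0$, $a^i\in V_+$ homogeneous, $n_i\ge1$, $w\in W$. *)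

From HB Require Import structures.
From mathcomp Require Import all_boot all_order all_algebra.
From mathcomp Require Import reals complex.
Set Implicit Arguments.
Unset Strict Implicit.
Unset Printing Implicit Defensive.
Import Order.TTheory GRing.Theory Num.Theory.
Local Open Scope ring_scope.

Section Defs.
Variable K : fieldType.

Definition binz (m : int) (i : nat) : K :=
  (\prod_(j < i) ((m - j%:Z)%:~R : K)) / (i`!)%:R.

Definition spanned (X : lmodType K) (S : X -> Prop) (v : X) : Prop :=
  exists (s : seq X) (c : seq K),
    (forall x, x \in s -> S x) /\
    v = \sum_(i < size s) c`_i *: s`_i.

(* an N-grading X = (+)_{n>=0} X_n, given by the family of projections pi n *)
Definition nat_grading (X : lmodType K) (pi : nat -> X -> X) : Prop :=
  [/\ (forall n a (u v : X), pi n (a *: u + v) = a *: pi n u + pi n v),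
      (forall n m v, pi n (pi m v) = if n == m then pi n v else 0),
      (forall v, exists N, forall n, (N <= n)%N -> pi n v = 0) &
      (forall v N, (forall n, (N <= n)%N -> pi n v = 0) ->
                   v = \sum_(n < N) pi n v)].

Definition homog_of (X : lmodType K) (pi : nat -> X -> X) (n : nat) (v : X) :=
  pi n v = v.
Definition homog (X : lmodType K) (pi : nat -> X -> X) (v : X) :=
  exists n, homog_of pi n v.

Definition subspace (X : lmodType K) (S : X -> Prop) : Prop :=
  S 0 /\ forall a u v, S u -> S v -> S (a *: u + v).

(* homogeneous subspace: spanned by homogeneous elements, equivalently a
   subspace stable under all homogeneous projections *)
Definition homog_subspace (X : lmodType K) (pi : nat -> X -> X)
  (S : X -> Prop) : Prop :=
  subspace S /\ forall n v, S v -> S (pi n v).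

(* modes a_n, with Y(a,z) = sum_n a_n z^{-n-1} *)
Definition bilinear_modes (V X : lmodType K) (Y : V -> int -> X -> X) : Prop :=
  (forall (a b : V) n (x : X) (c : K), Y (c *: a + b) n x = c *: Y a n x + Y b n x) /\
  (forall (a : V) n (x y : X) (c : K), Y a n (c *: x + y) = c *: Y a n x + Y a n y).

Definition truncation (V X : lmodType K) (Y : V -> int -> X -> X) : Prop :=
  forall a x, exists N : int, forall n, N <= n -> Y a n x = 0.

(* Jacobi (Borcherds) identity in components; all sums are finite by
   truncation, so they are taken over i < N for every sufficiently large N *)
Definition jacobi (V X : lmodType K) (YV : V -> int -> V -> V)
  (Y : V -> int -> X -> X) : Prop :=
  forall (a b : V) (x : X) (m n k : int), exists N0 : nat, forall N : nat,
    (N0 <= N)%N ->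
    \sum_(i < N) binz m i *: Y (YV a (k + i%:Z) b) (m + n - i%:Z) x =
    \sum_(i < N) (((-1) ^+ i * binz k i) *:
                   (Y a (m + k - i%:Z) (Y b (n + i%:Z) x)
                    - ((-1) ^ k) *: Y b (n + k - i%:Z) (Y a (m + i%:Z) x))).

Definition is_VOA (V : lmodType K) (Y : V -> int -> V -> V) (pi : nat -> V -> V)
  (vac omega : V) (c : K) : Prop :=
  let L := fun (n : int) (v : V) => Y omega (n + 1) v in
  [/\ nat_grading pi /\
      (forall n, exists s : seq V, forall v, homog_of pi n v ->
          spanned (fun x => x \in s) v),
      bilinear_modes Y /\ truncation Y,
      (forall n v, Y vac n v = if n == -1 then v else 0) /\
      ((forall a n, 0 <= n -> Y a n vac = 0) /\ (forall a, Y a (-1) vac = a)),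
      jacobi Y Y &
      [/\ homog_of pi 2 omega,
          (forall (m n : int) v, L m (L n v) - L n (L m v) =
              (m - n)%:~R *: L (m + n) v +
              (if m + n == 0 then ((m ^+ 3 - m)%:~R / 12%:R * c) *: v else 0)),
          (forall n v, homog_of pi n v -> L 0 v = n%:R *: v) &
          (forall a n v, Y (L (-1) a) n v = - (n%:~R *: Y a (n - 1) v))]].

Definition cft_type (V : lmodType K) (pi : nat -> V -> V) (vac : V) : Prop :=
  forall v, homog_of pi 0 v <-> exists a : K, v = a *: vac.

Definition in_Vplus (V : lmodType K) (pi : nat -> V -> V) (v : V) : Prop :=
  pi 0 v = 0.

(* admissible V-module (Dong-Li-Mason): weak module with an N-grading
   compatible with the modes:  a_n M(m) <= M(m + wt a - n - 1) *)
Definition is_admissible (V : lmodType K) (Y : V -> int -> V -> V)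
  (pi : nat -> V -> V) (vac : V) (M : lmodType K) (YM : V -> int -> M -> M)
  (piM : nat -> M -> M) : Prop :=
  [/\ bilinear_modes YM /\ truncation YM,
      (forall n w, YM vac n w = if n == -1 then w else 0),
      jacobi Y YM, nat_grading piM &
      (forall a k w m n, homog_of pi k a -> homog_of piM m w ->
         let d := m%:Z + k%:Z - n - 1 in
         YM a n w = if 0 <= d then piM `|d|%N (YM a n w) else 0)].

(* a^1_{-n_1} ... a^r_{-n_r} x  with a^i in S, n_i >= 1 *)
Definition monomial (V X : lmodType K) (Y : V -> int -> X -> X)
  (S : V -> Prop) (x v : X) : Prop :=
  exists l : seq (V * nat),
    (forall p, p \in l -> S p.1 /\ (1 <= p.2)%N) /\
    v = foldr (fun p y => Y p.1 (- (p.2%:Z)) y) x l.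

Definition strongly_generated_by (V X : lmodType K) (Y : V -> int -> X -> X)
  (S : V -> Prop) (T : X -> Prop) : Prop :=
  forall v : X, spanned (fun y => exists x, T x /\ monomial Y S x y) v.

Definition C1 (V : lmodType K) (pi : nat -> V -> V) (M : lmodType K)
  (YM : V -> int -> M -> M) (v : M) : Prop :=
  spanned (fun y => exists a w, homog pi a /\ in_Vplus pi a /\ y = YM a (-1) w) v.

End Defs.

(** Let [S] be the span of the monomials [u^1_{-n_1} ... u^r_{-n_r} w] with
    [u^i] in [U] and [w] in [W] homogeneous; [M(n)] lies in [S] by strong
    induction on [n].  As [M = W + C_1(M)], it suffices to treat the degree-[n]
    part of [a_{-1} v] for homogeneous [a] in [V_+], and [a] is a combination
    of monomials [u_{-k} b] since [U] strongly generates [V].  The iterate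
    formula (the Jacobi identity at [m = 0]) expands [(u_{-k} b)_j x] into
    terms [u_{-k-i} (b_{j+i} x)], in [S] by induction because [u] raises the
    degree, and [b_{j-k-i} (u_i x)], where the mode of [b] is now at most [-2]
    and hence raises the degree strictly; induction on the length of the
    monomial [b] ends at [vac_{-1} = id]. *)
From HB Require Import structures.
From mathcomp Require Import all_boot all_order all_algebra.
From mathcomp Require Import reals complex.
From mathcomp Require Import zify.
Set Implicit Arguments.
Unset Strict Implicit.
Unset Printing Implicit Defensive.
Import Order.TTheory GRing.Theory Num.Theory.
Local Open Scope ring_scope.

Section Span.
Variables (K : fieldType) (X : lmodType K).
Implicit Types (P Q T : X -> Prop) (u v x : X).

Lemma subspaceZ T a v : subspace T -> T v -> T (a *: v).
Proof. by move=> [T0 TD] Tv; rewrite -[_ *: _]addr0; apply: TD. Qed.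

Lemma subspaceD T u v : subspace T -> T u -> T v -> T (u + v).
Proof. by move=> [_ TD] Tu Tv; rewrite -[u]scale1r; apply: TD. Qed.

Lemma subspaceB T u v : subspace T -> T u -> T v -> T (u - v).
Proof. by move=> [_ TD] Tu Tv; rewrite addrC -scaleN1r; apply: TD. Qed.

Lemma subspace_sum T N (F : 'I_N -> X) :
  subspace T -> (forall i, T (F i)) -> T (\sum_(i < N) F i).
Proof.
move=> sT TF; apply: (big_ind T) => [|u v|i _]; first by case: sT.
  exact: subspaceD.
exact: TF.
Qed.

Lemma subspace_spanned P : subspace (spanned P).
Proof.
split; first by exists [::], [::]; rewrite big_ord0.
move=> a _ _ [s1 [c1 [P1 ->]]] [s2 [c2 [P2 ->]]].
exists (s1 ++ s2), (mkseq (fun i => a * c1`_i) (size s1) ++ c2); split.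
  by move=> x; rewrite mem_cat => /orP [/P1|/P2].
rewrite size_cat big_split_ord scaler_sumr /=; congr (_ + _).
  apply: eq_bigr => i _.
  by rewrite !nth_cat size_mkseq ltn_ord nth_mkseq // scalerA.
apply: eq_bigr => i _.
by rewrite !nth_cat size_mkseq ltnNge leq_addr /= addKn.
Qed.

Lemma spanned0 P : spanned P 0.
Proof. by case: (subspace_spanned P). Qed.

Lemma mem_spanned P x : P x -> spanned P x.
Proof.
move=> Px; exists [:: x], [:: 1]; split; first by move=> y; rewrite inE => /eqP ->.
by rewrite big_ord1 scale1r.
Qed.

Lemma spanned_ind P T : subspace T -> (forall x, P x -> T x) ->
  forall v, spanned P v -> T v.
Proof.
move=> sT PT v [s [c [sP ->]]]; apply: subspace_sum => // i.
by apply: subspaceZ => //; apply/PT/sP/mem_nth.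
Qed.

Lemma spanned_mono P Q v : (forall x, P x -> Q x) -> spanned P v -> spanned Q v.
Proof. by move=> PQ; apply: (spanned_ind (subspace_spanned Q)) => x /PQ/mem_spanned. Qed.

End Span.

Section LinearFun.
Variables (K : fieldType) (X Z : lmodType K) (f : X -> Z).
Hypothesis f_lin : linear f.

Let fL : {linear X -> Z} := HB.pack f (GRing.isLinear.Build K X Z *:%R f f_lin).

Lemma lin0 : f 0 = 0. Proof. exact: (linear0 fL). Qed.

Lemma linD u v : f (u + v) = f u + f v. Proof. exact: (linearD fL). Qed.

Lemma linB u v : f (u - v) = f u - f v. Proof. exact: (linearB fL). Qed.

Lemma linZ a v : f (a *: v) = a *: f v. Proof. exact: (linearZ_LR fL). Qed.

Lemma lin_sum N (F : 'I_N -> X) : f (\sum_(i < N) F i) = \sum_(i < N) f (F i).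
Proof. exact: (linear_sum fL). Qed.

Lemma subspace_preim (T : Z -> Prop) : subspace T -> subspace (fun v => T (f v)).
Proof.
move=> [T0 TD]; split; first by rewrite lin0.
by move=> a u v Tu Tv; rewrite f_lin; apply: TD.
Qed.

End LinearFun.

Section Grading.
Variables (K : fieldType) (X : lmodType K) (pi : nat -> X -> X).
Hypothesis grX : nat_grading pi.

Lemma grading_linear n : linear (pi n).
Proof. by case: grX => + _ _ _; apply. Qed.

Lemma homog_of0 n : homog_of pi n 0.
Proof. exact: lin0 (grading_linear n). Qed.

Lemma homog_of_proj n v : homog_of pi n (pi n v).
Proof. by case: grX => _ proj_idem _ _; rewrite /homog_of proj_idem eqxx. Qed.

Lemma proj_homog_of D e y : homog_of pi e y -> pi D y = if D == e then y else 0.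
Proof.
case: grX => _ proj_idem _ _ ye; rewrite -ye proj_idem.
by case: eqP => [->|//]; rewrite ye.
Qed.

Lemma grading_decomp v : exists N, v = \sum_(m < N) pi m v.
Proof. by case: grX => _ _ /(_ v) [N vN] /(_ v N vN); exists N. Qed.

Lemma grading_ind T : subspace T -> (forall n v, homog_of pi n v -> T v) ->
  forall v, T v.
Proof.
move=> sT Thom v; have [N ->] := grading_decomp v.
by apply: subspace_sum => // m; apply/Thom/homog_of_proj.
Qed.

End Grading.

Lemma binz0n (K : fieldType) i : binz K 0 i = (i == 0)%:R.
Proof.
case: i => [|i]; first by rewrite /binz big_ord0 fact0 divr1.
by rewrite /binz big_ord_recl /= subrr mul0r mul0r.
Qed.

Section Jacobi.
Variables (K : fieldType) (V X : lmodType K).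
Variables (YV : V -> int -> V -> V) (Y : V -> int -> X -> X).
Hypothesis jacY : jacobi YV Y.

Lemma jacobi_iterate a b x j k : exists N,
  Y (YV a k b) j x =
  \sum_(i < N) (((-1) ^+ i * binz K k i) *:
                 (Y a (k - i%:Z) (Y b (j + i%:Z) x)
                  - ((-1) ^ k) *: Y b (j + k - i%:Z) (Y a i%:Z x))).
Proof.
have [N jacN] := jacY a b x 0 j k; exists N.+1.
have := jacN N.+1 (leqnSn N); rewrite big_ord_recl big1 => [|i _]; last first.
  by rewrite binz0n scale0r.
by rewrite /= -[Posz 0]/(0 : int) binz0n scale1r !addr0 !add0r.
Qed.

End Jacobi.

Section MonomialSpan.
Variables (K : fieldType) (V X : lmodType K) (Y : V -> int -> X -> X).

Definition mono_span (S : V -> Prop) (T : X -> Prop) : X -> Prop :=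
  spanned (fun y => exists x, T x /\ monomial Y S x y).

Lemma mono_span_gen S T x : T x -> mono_span S T x.
Proof. by move=> Tx; apply: mem_spanned; exists x; split => //; exists [::]. Qed.

Lemma mono_span_mode S T u j v : linear (Y u j) -> S u -> j <= -1 ->
  mono_span S T v -> mono_span S T (Y u j v).
Proof.
move=> Yuj_lin Su j_le.
apply: (spanned_ind (subspace_preim Yuj_lin (subspace_spanned _))).
move=> _ [x [Tx [l [lS ->]]]]; apply: mem_spanned; exists x; split => //.
exists ((u, `|j|%N) :: l); split => [p|/=]; last by congr (Y _ _ _); lia.
by rewrite inE => /orP [/eqP -> /= | /lS]; [split => //; lia | ].
Qed.

Lemma mono_span_mono S S' T T' v :
  (forall u, S u -> S' u) -> (forall x, T x -> T' x) ->
  mono_span S T v -> mono_span S' T' v.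
Proof.
move=> SS' TT'; apply: spanned_mono => _ [x [/TT' Tx [l [lS ->]]]].
by exists x; split => //; exists l; split => // p /lS [/SS'].
Qed.

End MonomialSpan.

Section StrongGeneration.
Variables (K : fieldType) (V : lmodType K) (Y : V -> int -> V -> V).
Variables (pi : nat -> V -> V) (vac : V).
Variables (M : lmodType K) (YM : V -> int -> M -> M) (piM : nat -> M -> M).
Hypotheses (grV : nat_grading pi) (Ylin : bilinear_modes Y).
Hypothesis admM : is_admissible Y pi vac YM piM.
Variable U : V -> Prop.
Hypotheses (homU : homog_subspace pi U) (U_Vplus : forall u, U u -> in_Vplus pi u).
Hypothesis sgU : strongly_generated_by Y U (fun x => x = vac).
Variable W : M -> Prop.
Hypothesis homW : homog_subspace piM W.
Hypothesis M_W_C1 : forall v : M, exists w c1, W w /\ C1 pi YM c1 /\ v = w + c1.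

Local Notation Sp :=
  (mono_span YM (fun u => U u /\ homog pi u) (fun w => W w /\ homog piM w)).

Let grM : nat_grading piM. Proof. by case: admM. Qed.

Let jacM : jacobi Y YM. Proof. by case: admM. Qed.

Let Y_linearl j x : linear (fun a => Y a j x).
Proof. by case: Ylin => Ylinl _ c a b; apply: Ylinl. Qed.

Let YM_linear a j : linear (YM a j).
Proof. by case: admM => -[[_ YMlin] _] _ _ _ _ c u v; apply: YMlin. Qed.

Let YM_linearl j x : linear (fun a => YM a j x).
Proof. by case: admM => -[[YMlinl _] _] _ _ _ _ c a b; apply: YMlinl. Qed.

Lemma homog_of_mode a k m j w : homog_of pi k a -> homog_of piM m w ->
  homog_of piM (absz (m%:Z + k%:Z - j - 1)%R) (YM a j w).
Proof.
move=> ak wm; case: admM => _ _ _ _ /(_ a k w m j ak wm) /=.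
by case: ifP => _ ->; [apply: homog_of_proj | apply: homog_of0].
Qed.

Section Step.
Variable n : nat.
Hypothesis IH : forall m x, (m < n)%N -> homog_of piM m x -> Sp x.

Lemma proj_mode_spanned u w j z D : U u -> homog_of pi w u -> (0 < w)%N ->
  j <= -1 -> (D <= n)%N -> Sp (piM D (YM u j z)).
Proof.
move=> Uu uw w_gt0 j_le D_le; have [N ->] := grading_decomp grM z.
rewrite (lin_sum (YM_linear u j)) (lin_sum (grading_linear grM D)).
apply: subspace_sum (subspace_spanned _) _ => m.
rewrite (proj_homog_of grM D (homog_of_mode j uw (homog_of_proj grM m z))).
case: eqP => [D_eq|_]; last exact: spanned0.
apply: mono_span_mode => //; first by split; [|exists w].
by apply: IH (homog_of_proj grM m z); lia.
Qed.

(* The invariant of the induction on monomials: either the argument has degree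
   below [n], or the mode is at most [-2] and hence raises the degree. *)
Definition low_modes_spanned (a : V) : Prop :=
  forall j x d D, j <= -1 -> homog_of piM d x -> (D <= n)%N ->
  (d < n)%N \/ j <= -2 -> Sp (piM D (YM a j x)).

Lemma subspace_low_modes_spanned : subspace low_modes_spanned.
Proof.
split=> [j x d D _ _ _ _ | c a b la lb j x d D j_le xd D_le lt].
  by rewrite (lin0 (YM_linearl j x)) (lin0 (grading_linear grM D)); apply: spanned0.
rewrite (YM_linearl j x) (grading_linear grM D).
by apply: (subspace_spanned _).2; [apply: la xd _ _ | apply: lb xd _ _].
Qed.

Lemma low_modes_spanned_vac : low_modes_spanned vac.
Proof.
move=> j x d D j_le xd D_le lt; case: admM => _ vacM _ _ _; rewrite vacM.
case: eqP => [j_eq|_]; last by rewrite (lin0 (grading_linear grM D)); apply: spanned0.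
rewrite (proj_homog_of grM D xd); case: eqP => _; last exact: spanned0.
by apply: IH xd; case: lt => //; lia.
Qed.

Lemma low_modes_spanned_homog_mode u w k b : U u -> homog_of pi w u -> (0 < w)%N ->
  (0 < k)%N -> low_modes_spanned b -> low_modes_spanned (Y u (- k%:Z) b).
Proof.
move=> Uu uw w_gt0 k_gt0 lb j x d D j_le xd D_le _.
have [N ->] := jacobi_iterate jacM u b x j (- k%:Z).
have piM_lin := grading_linear grM D.
rewrite (lin_sum piM_lin); apply: subspace_sum (subspace_spanned _) _ => i.
rewrite (linZ piM_lin) (linB piM_lin) (linZ piM_lin).
apply: subspaceZ (subspace_spanned _) _; apply: subspaceB (subspace_spanned _) _ _.
  by apply: proj_mode_spanned uw _ _ _ => //; lia.
apply: subspaceZ (subspace_spanned _) _.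
by apply: lb (homog_of_mode _ uw xd) _ _ => //; [lia | right; lia].
Qed.

Lemma low_modes_spanned_mode u k b : U u -> (0 < k)%N ->
  low_modes_spanned b -> low_modes_spanned (Y u (- k%:Z) b).
Proof.
move=> Uu k_gt0 lb; have [N ->] := grading_decomp grV u.
rewrite (lin_sum (Y_linearl _ _)).
apply: subspace_sum subspace_low_modes_spanned _ => -[[|m] _] /=.
  by rewrite (U_Vplus Uu) (lin0 (Y_linearl _ _)); case: subspace_low_modes_spanned.
apply: low_modes_spanned_homog_mode (homog_of_proj grV _ u) _ _ lb => //.
by case: homU => _; apply.
Qed.

Lemma low_modes_spanned_all a : low_modes_spanned a.
Proof.
apply: spanned_ind subspace_low_modes_spanned _ a (sgU a).
move=> _ [_ [-> [l [lU ->]]]]; elim: l lU => [|[u k] l IHl] lU /=.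
  exact: low_modes_spanned_vac.
have [Uu k_gt0] := lU _ (mem_head _ _).
apply: low_modes_spanned_mode => //; apply: IHl => p lp.
by apply: lU; rewrite inE lp orbT.
Qed.

Lemma proj_C1_gen_spanned a v : homog pi a -> in_Vplus pi a ->
  Sp (piM n (YM a (-1) v)).
Proof.
move=> [k ak] a_plus; case: (posnP k) => [k0 | k_gt0].
  have -> : a = 0 by rewrite -ak k0 a_plus.
  rewrite (lin0 (YM_linearl _ _)) (lin0 (grading_linear grM n)).
  exact: spanned0.
have [N ->] := grading_decomp grM v.
rewrite (lin_sum (YM_linear _ _)) (lin_sum (grading_linear grM n)).
apply: subspace_sum (subspace_spanned _) _ => d.
case: (ltnP d n) => [d_lt | d_ge].
  by apply: low_modes_spanned_all (homog_of_proj grM d v) _ _ => //; left.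
rewrite (proj_homog_of grM n (homog_of_mode (-1) ak (homog_of_proj grM d v))).
by rewrite ifN_eq; [apply: spanned0 | lia].
Qed.

Lemma homog_spanned x : homog_of piM n x -> Sp x.
Proof.
move=> xn; rewrite -xn; have [w [c1 [Ww [c1C ->]]]] := M_W_C1 x.
rewrite (linD (grading_linear grM n)); apply: subspaceD (subspace_spanned _) _ _.
  apply: mono_span_gen; split; last by exists n; apply: homog_of_proj.
  by case: homW => _; apply.
apply: spanned_ind (subspace_preim (grading_linear grM n) (subspace_spanned _)) _ _ c1C.
by move=> _ [a [y [ah [a_plus ->]]]]; apply: proj_C1_gen_spanned.
Qed.

End Step.

Lemma mono_span_all v : Sp v.
Proof.
move: v; apply: (grading_ind grM (subspace_spanned _)) => n.
elim/ltn_ind: n => n IH x; apply: homog_spanned => m y /IH; apply.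
Qed.

End StrongGeneration.

Theorem proposition4p2 (R : realType)
  (V : lmodType R[i]) (Y : V -> int -> V -> V) (pi : nat -> V -> V)
  (vac omega : V) (c : R[i])
  (HV : is_VOA Y pi vac omega c) (Hcft : cft_type pi vac)
  (U : V -> Prop) (HU : homog_subspace pi U) (HUplus : forall u, U u -> in_Vplus pi u)
  (HsgU : strongly_generated_by Y U (fun x => x = vac))
  (M : lmodType R[i]) (YM : V -> int -> M -> M) (piM : nat -> M -> M)
  (HM : is_admissible Y pi vac YM piM)
  (W : M -> Prop) (HW : homog_subspace piM W)
  (HMW : forall v : M, exists w c1, W w /\ C1 pi YM c1 /\ v = w + c1) :
  strongly_generated_by YM (fun u => U u /\ homog pi u)
      (fun w => W w /\ homog piM w) /\
  strongly_generated_by YM (fun a => homog pi a /\ in_Vplus pi a) W.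
Proof.
have [[grV _] [Ylin _] _ _ _] := HV.
have spanM := mono_span_all grV Ylin HM HU HUplus HsgU HW HMW.
split=> v; first exact: spanM.
apply: mono_span_mono (spanM v) => [u [Uu uh] | x []] //.
by split; last exact: HUplus.
Qed.
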